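(* Let $K$ be a connected simplicial complex, let $E$ be the set of edges of a spanning tree of $K$, and let $p$ be a vertex of $K$. Then $\mathcal{G}(K)\cong \mathrm{F}(E)*\pi_1(K,p)$, where $\mathrm{F}(E)$ is the free group on $E$. In particular $\pi_1(K,p)$ is a doubly free factor of $\mathcal{G}(K)$.
   Context: A simplicial complex $K$ is a collection of nonempty finite subsets (simplices) of a vertex set such that every singleton is a simplex and nonempty subsets of simplices are simplices. The floating homotopy group $\mathcal{G}(K)$ is the group presented by generators $[x,y]$ for all vertices $x,y$ with $\{x,y\}$ a simplex (including $x=y$), and relations $[x,z]=[x,y]\cdot[y,z]$ whenever $\{x,y,z\}$ is a simplex (vertices not necessarily distinct). $\pi_1(K,p)$ is the edge-path fundamental group of $K$ at $p$. A group $G$ is a doubly free factor of $H$ if $H\cong F*G$ for some free group $F$, $*$ denoting free product. *)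

From Stdlib Require Import List Relations.
Import ListNotations.
Set Implicit Arguments.

Section Complexes.
Variable V : Type.

(* A simplicial complex on the vertex set V: a simplex is the (finite, nonempty)
   set of entries of a list; [S l] means "the set of entries of l is a simplex".
   Lists with the same entries denote the same simplex (follows from (3)). *)
Definition is_complex (S : list V -> Prop) : Prop :=
  (forall l, S l -> l <> []) /\
  (forall x : V, S [x]) /\
  (forall l l', S l -> l' <> [] -> incl l' l -> S l').

Definition edge (S : list V -> Prop) (x y : V) : Prop := S [x; y].

Fixpoint chain (R : V -> V -> Prop) (x : V) (l : list V) : Prop :=
  match l with
  | [] => True
  | y :: l' => R x y /\ chain R y l'
  end.

Lemma last_cons (y x : V) (l : list V) : last (y :: l) x = last l y.
Proof.
  revert y x; induction l as [|z l IH]; intros y x; [reflexivity|].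
  change (last (z :: l) x = last (z :: l) y).
  rewrite (IH z x). symmetry. apply IH.
Qed.

Lemma chain_app (R : V -> V -> Prop) x l1 l2 :
  chain R x (l1 ++ l2) <-> chain R x l1 /\ chain R (last l1 x) l2.
Proof.
  revert x; induction l1 as [|y l1 IH]; intros x.
  - simpl; tauto.
  - cbn [app chain]. rewrite IH, last_cons. tauto.
Qed.

Lemma last_app_gen (l1 l2 : list V) (x : V) :
  last (l1 ++ l2) x = last l2 (last l1 x).
Proof.
  revert x; induction l1 as [|y l1 IH]; intros x; [reflexivity|].
  change ((y :: l1) ++ l2) with (y :: (l1 ++ l2)).
  rewrite !last_cons. apply IH.
Qed.

Definition connected (S : list V -> Prop) : Prop :=
  forall x y : V, exists l, chain (edge S) x l /\ last l x = y.

Definition spanning_tree (S : list V -> Prop) (T : V -> V -> Prop) : Prop :=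
  (forall x y, T x y -> x <> y /\ edge S x y) /\
  (forall x y, T x y -> T y x) /\
  (forall x y : V, exists l, chain T x l /\ last l x = y) /\
  ~ (exists x l, NoDup (x :: l) /\ 2 <= length l /\ chain T x l /\ T (last l x) x).

End Complexes.

Record grp := Grp {
  car :> Type;
  geq : car -> car -> Prop;
  gmul : car -> car -> car;
  gone : car }.

Definition is_group (G : grp) : Prop :=
  (forall x, geq G x x) /\
  (forall x y, geq G x y -> geq G y x) /\
  (forall x y z, geq G x y -> geq G y z -> geq G x z) /\
  (forall x x' y y', geq G x x' -> geq G y y' -> geq G (gmul G x y) (gmul G x' y')) /\
  (forall x y z, geq G (gmul G (gmul G x y) z) (gmul G x (gmul G y z))) /\
  (forall x, geq G (gmul G (gone G) x) x) /\
  (forall x, geq G (gmul G x (gone G)) x) /\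
  (forall x, exists y, geq G (gmul G x y) (gone G) /\ geq G (gmul G y x) (gone G)).

Definition is_hom (G H : grp) (h : G -> H) : Prop :=
  (forall x y, geq G x y -> geq H (h x) (h y)) /\
  (forall x y, geq H (h (gmul G x y)) (gmul H (h x) (h y))) /\
  geq H (h (gone G)) (gone H).

(* letters: (false,(x,y)) is the generator [x,y], (true,(x,y)) its inverse *)
Definition fword (V : Type) := list (bool * (V * V)).

Inductive fl_eqv (V : Type) (S : list V -> Prop) : fword V -> fword V -> Prop :=
| fe_refl w : fl_eqv S w w
| fe_sym w w' : fl_eqv S w w' -> fl_eqv S w' w
| fe_trans w1 w2 w3 : fl_eqv S w1 w2 -> fl_eqv S w2 w3 -> fl_eqv S w1 w3
| fe_app a b c d : fl_eqv S a b -> fl_eqv S c d -> fl_eqv S (a ++ c) (b ++ d)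
| fe_cancel (b : bool) g : fl_eqv S [(b, g); (negb b, g)] []
| fe_rel x y z : S [x; y; z] ->
    fl_eqv S [(false, (x, z))] [(false, (x, y)); (false, (y, z))].

Definition fvalid (V : Type) (S : list V -> Prop) (w : fword V) : Prop :=
  Forall (fun a => edge S (fst (snd a)) (snd (snd a))) w.

Definition fl_car (V : Type) (S : list V -> Prop) := {w : fword V | fvalid S w}.

Definition fl_mul (V : Type) (S : list V -> Prop) (a b : fl_car S) : fl_car S.
Proof.
  exists (proj1_sig a ++ proj1_sig b). unfold fvalid.
  apply Forall_app; split; [exact (proj2_sig a) | exact (proj2_sig b)].
Defined.

Definition fl_one (V : Type) (S : list V -> Prop) : fl_car S :=
  exist _ [] (Forall_nil _).

Definition floating_group (V : Type) (S : list V -> Prop) : grp :=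
  {| car := fl_car S;
     geq := fun a b => fl_eqv S (proj1_sig a) (proj1_sig b);
     gmul := @fl_mul V S;
     gone := fl_one S |}.

(* An edge loop at p is the vertex sequence p :: l (consecutive vertices span
   simplices) with last vertex p; we store l. *)
Definition loop_car (V : Type) (S : list V -> Prop) (p : V) :=
  {l : list V | chain (edge S) p l /\ last l p = p}.

Inductive pstep (V : Type) (S : list V -> Prop) : list V -> list V -> Prop :=
| ps_contract a b u v w : S [u; v; w] ->
    pstep S (a ++ [u; v; w] ++ b) (a ++ [u; w] ++ b).

Definition loop_eqv (V : Type) (S : list V -> Prop) (p : V) (l1 l2 : list V) : Prop :=
  clos_refl_sym_trans (list V) (pstep S) (p :: l1) (p :: l2).

Definition loop_mul (V : Type) (S : list V -> Prop) (p : V)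
  (a b : loop_car S p) : loop_car S p.
Proof.
  exists (proj1_sig a ++ proj1_sig b).
  destruct a as [l1 [H1 E1]], b as [l2 [H2 E2]]; simpl.
  split.
  - apply chain_app. rewrite E1. split; assumption.
  - rewrite last_app_gen, E1. exact E2.
Defined.

Definition loop_one (V : Type) (S : list V -> Prop) (p : V) : loop_car S p :=
  exist _ [] (conj I eq_refl).

Definition edge_path_group (V : Type) (S : list V -> Prop) (p : V) : grp :=
  {| car := loop_car S p;
     geq := fun a b => loop_eqv S p (proj1_sig a) (proj1_sig b);
     gmul := @loop_mul V S p;
     gone := loop_one S p |}.

(* E = the set of (unordered) edges of the symmetric relation T; a map out of E
   is encoded as a function f on ordered pairs with f x y = f y x on edges.
   G ≅ F(E) * H is expressed by the defining (coproduct) universal property: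
   there are a map a : E -> G and a homomorphism j : H -> G such that for every
   group X, every map f : E -> X and every homomorphism g : H -> X there is a
   unique homomorphism h : G -> X with h o a = f and h o j = g. *)
Definition is_free_prod_on_edges (V : Type) (T : V -> V -> Prop) (G H : grp) : Prop :=
  exists (a : V -> V -> G) (j : H -> G),
    (forall x y, T x y -> geq G (a x y) (a y x)) /\ is_hom H G j /\
    forall X : grp, is_group X ->
    forall (f : V -> V -> X) (g : H -> X),
      (forall x y, T x y -> geq X (f x y) (f y x)) -> is_hom H X g ->
      (exists h : G -> X, is_hom G X h /\
         (forall x y, T x y -> geq X (h (a x y)) (f x y)) /\
         (forall z, geq X (h (j z)) (g z))) /\
      (forall h1 h2 : G -> X, is_hom G X h1 -> is_hom G X h2 ->
         (forall x y, T x y -> geq X (h1 (a x y)) (f x y)) ->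
         (forall z, geq X (h1 (j z)) (g z)) ->
         (forall x y, T x y -> geq X (h2 (a x y)) (f x y)) ->
         (forall z, geq X (h2 (j z)) (g z)) ->
         forall w, geq X (h1 w) (h2 w)).

(* Fix, for every vertex x, a path in the spanning tree from p to x.  A
   homomorphism out of G(K) is the same thing as an edge labelling e with
   e x y * e y z = e x z on every 2-simplex (a cocycle).  Given g on pi_1(K,p),
   loop_value x y := g (tree path to x, edge xy, tree path back from y) is a
   cocycle, because the concatenation of two such loops is homotopic to a
   third one.  A closed walk in a tree has trivial product, so loop_value is
   trivial on tree edges, and its product along any loop at p is g of that
   loop.  Given f on the tree edges, let tree_value x be the product of f
   along the tree path to x; the twisted cocycle
   tree_value(x)^-1 * loop_value x y * tree_value y equals f on tree edges and
   restricts to g on pi_1(K,p).  Conversely the value of any homomorphism on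
   [x,y] is forced: its values along tree paths are fixed by f and its value
   on the loop through xy is fixed by g. *)

From Stdlib Require Import List Relations Classical ClassicalEpsilon
  FunctionalExtensionality PropExtensionality ProofIrrelevance
  Setoid Morphisms Wf_nat Permutation ListDec Lia.
Import ListNotations.
Set Implicit Arguments.

Class IsGroup (X : grp) : Prop := { group_axioms : is_group X }.

#[export] Instance geq_equivalence (X : grp) {HX : IsGroup X} : Equivalence (geq X).
Proof. destruct HX as [(r & s & t & _)]. split; red; eauto. Qed.

#[export] Instance gmul_proper (X : grp) {HX : IsGroup X} :
  Proper (geq X ==> geq X ==> geq X) (gmul X).
Proof. destruct HX as [(_ & _ & _ & m & _)]. intros a b Hab c d Hcd. auto. Qed.

Definition ginv {X : grp} (x : X) : X :=
  epsilon (inhabits (gone X))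
    (fun y => geq X (gmul X x y) (gone X) /\ geq X (gmul X y x) (gone X)).

Section GroupTheory.
Context {X : grp} {HX : IsGroup X}.
Local Notation "a * b" := (gmul X a b).
Local Notation "a == b" := (geq X a b) (at level 70).
Local Notation "1" := (gone X).

Lemma mulgA (a b c : X) : a * b * c == a * (b * c).
Proof. apply group_axioms. Qed.

Lemma mul1g (a : X) : 1 * a == a.
Proof. apply group_axioms. Qed.

Lemma mulg1 (a : X) : a * 1 == a.
Proof. apply group_axioms. Qed.

Lemma ginv_spec (a : X) : a * ginv a == 1 /\ ginv a * a == 1.
Proof. unfold ginv. apply epsilon_spec, group_axioms. Qed.

Lemma mulgV (a : X) : a * ginv a == 1.
Proof. apply ginv_spec. Qed.

Lemma mulVg (a : X) : ginv a * a == 1.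
Proof. apply ginv_spec. Qed.

Lemma mulKg (a b : X) : ginv a * (a * b) == b.
Proof. rewrite <- mulgA, mulVg, mul1g. reflexivity. Qed.

Lemma mulKVg (a b : X) : a * (ginv a * b) == b.
Proof. rewrite <- mulgA, mulgV, mul1g. reflexivity. Qed.

Lemma mulgI (a b c : X) : a * b == a * c -> b == c.
Proof. intros H. rewrite <- (mulKg a b), H, mulKg. reflexivity. Qed.

Lemma ginv_unique (a b : X) : a * b == 1 -> b == ginv a.
Proof. intros H. apply (mulgI a). rewrite H, mulgV. reflexivity. Qed.

Lemma invg1 : ginv 1 == 1.
Proof. symmetry. apply ginv_unique, mul1g. Qed.

Lemma eq_of_mulgV1 (a b : X) : a * ginv b == 1 -> a == b.
Proof. intros H. rewrite <- (mulg1 a), <- (mulVg b), <- mulgA, H, mul1g. reflexivity. Qed.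

Lemma mulg_idem (a : X) : a * a == a -> a == 1.
Proof. intros H. apply (mulgI a). rewrite H, mulg1. reflexivity. Qed.

End GroupTheory.

#[export] Instance ginv_proper (X : grp) {HX : IsGroup X} : Proper (geq X ==> geq X) (@ginv X).
Proof. intros a b H. apply ginv_unique. rewrite <- H. apply mulgV. Qed.

Section Walks.
Context {V : Type}.

Lemma chain_impl {R R' : V -> V -> Prop} :
  (forall a b, R a b -> R' a b) -> forall x l, chain R x l -> chain R' x l.
Proof.
  intros HR x l. revert x; induction l as [|y l IH]; intros x; simpl; [tauto|].
  intros [Hxy Hl]. auto.
Qed.

Fixpoint rev_walk (x : V) (l : list V) : list V :=
  match l with
  | [] => []
  | y :: l' => rev_walk y l' ++ [x]
  end.

Lemma rev_walk_spec x l : last l x :: rev_walk x l = rev (x :: l).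
Proof.
  revert x; induction l as [|y l IH]; intros x; [reflexivity|].
  cbn [rev_walk]. rewrite last_cons, app_comm_cons, IH. reflexivity.
Qed.

Lemma last_rev_walk x l : last (rev_walk x l) (last l x) = x.
Proof. rewrite <- (last_cons _ x), rev_walk_spec. apply last_last. Qed.

Lemma rev_walkK x l : rev_walk (last l x) (rev_walk x l) = l.
Proof.
  assert (E := rev_walk_spec (last l x) (rev_walk x l)).
  rewrite (rev_walk_spec x l), rev_involutive in E. congruence.
Qed.

Lemma chain_rev_walk (R : V -> V -> Prop) x l :
  (forall a b, R a b -> R b a) -> chain R x l -> chain R (last l x) (rev_walk x l).
Proof.
  intros Rsym. revert x; induction l as [|y l IH]; intros x; [simpl; tauto|].
  intros [Hxy Hl]. cbn [rev_walk]. rewrite last_cons.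
  apply chain_app. rewrite last_rev_walk. simpl. auto.
Qed.

Lemma walk_split_last (x : V) (l : list V) : exists pre, x :: l = pre ++ [last l x].
Proof.
  exists (rev (rev_walk x l)).
  rewrite <- (rev_involutive (x :: l)), <- rev_walk_spec. reflexivity.
Qed.

Fixpoint walk_word (x : V) (l : list V) : fword V :=
  match l with
  | [] => []
  | y :: l' => (false, (x, y)) :: walk_word y l'
  end.

Lemma walk_word_app x l1 l2 :
  walk_word x (l1 ++ l2) = walk_word x l1 ++ walk_word (last l1 x) l2.
Proof.
  revert x; induction l1 as [|y l1 IH]; intros x; [reflexivity|].
  cbn [walk_word app]. rewrite IH, last_cons. reflexivity.
Qed.

End Walks.

Section WalkProducts.
Context {V : Type} {X : grp} {HX : IsGroup X}.
Local Notation "a * b" := (gmul X a b).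
Local Notation "a == b" := (geq X a b) (at level 70).
Local Notation "1" := (gone X).

Definition letter_value (e : V -> V -> X) (a : bool * (V * V)) : X :=
  let '(b, (x, y)) := a in if b then ginv (e x y) else e x y.

Definition eval_word (e : V -> V -> X) (w : fword V) : X :=
  fold_right (fun a r => letter_value e a * r) 1 w.

Fixpoint walk_prod (e : V -> V -> X) (x : V) (l : list V) : X :=
  match l with
  | [] => 1
  | y :: l' => e x y * walk_prod e y l'
  end.

Lemma eval_word_app e w1 w2 :
  eval_word e (w1 ++ w2) == eval_word e w1 * eval_word e w2.
Proof.
  induction w1 as [|a w1 IH]; simpl.
  - symmetry. apply mul1g.
  - rewrite IH, mulgA. reflexivity.
Qed.

Lemma eval_walk_word e x l : eval_word e (walk_word x l) = walk_prod e x l.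
Proof.
  revert x; induction l as [|y l IH]; intros x; [reflexivity|].
  simpl. f_equal. apply IH.
Qed.

Lemma walk_prod_app e x l1 l2 :
  walk_prod e x (l1 ++ l2) == walk_prod e x l1 * walk_prod e (last l1 x) l2.
Proof.
  revert x; induction l1 as [|y l1 IH]; intros x; cbn [walk_prod app].
  - symmetry. apply mul1g.
  - rewrite IH, last_cons, mulgA. reflexivity.
Qed.

Lemma walk_prod_ext (R : V -> V -> Prop) e1 e2 x l :
  (forall a b, R a b -> e1 a b == e2 a b) -> chain R x l ->
  walk_prod e1 x l == walk_prod e2 x l.
Proof.
  intros He. revert x; induction l as [|y l IH]; intros x; simpl; [reflexivity|].
  intros [Hxy Hl]. rewrite (He _ _ Hxy), IH by exact Hl. reflexivity.
Qed.

Lemma walk_prod_conj e (t : V -> X) x l :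
  walk_prod (fun a b => ginv (t a) * (e a b * t b)) x l
  == ginv (t x) * (walk_prod e x l * t (last l x)).
Proof.
  revert x; induction l as [|y l IH]; intros x; cbn [walk_prod].
  - rewrite mul1g. symmetry. apply mulVg.
  - rewrite IH, last_cons, !mulgA, mulKVg. reflexivity.
Qed.

End WalkProducts.

Section ClosedWalksInTrees.
Context {V : Type} {X : grp} {HX : IsGroup X} (T : V -> V -> Prop).
Local Notation "a * b" := (gmul X a b).
Local Notation "a == b" := (geq X a b) (at level 70).
Local Notation "1" := (gone X).
Hypothesis T_sym : forall x y, T x y -> T y x.
Hypothesis T_irrefl : forall x, ~ T x x.
Hypothesis T_acyclic :
  ~ (exists x l, NoDup (x :: l) /\ 2 <= length l /\ chain T x l /\ T (last l x) x).
Variable e : V -> V -> X.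
Hypothesis e_inv : forall u v, T u v -> e u v * e v u == 1.

(* In an acyclic graph a closed walk without repeated vertices can only go
   back and forth along a single edge. *)
Lemma walk_prod_simple_cycle (x : V) (s : list V) :
  NoDup (s ++ [x]) -> chain T x (s ++ [x]) -> walk_prod e x (s ++ [x]) == 1.
Proof.
  intros Hnd Hl. apply chain_app in Hl as [Hs [Hback _]].
  apply (Permutation_NoDup (Permutation_sym (Permutation_cons_append s x))) in Hnd.
  destruct s as [|y [|y' s]].
  - exfalso. exact (T_irrefl Hback).
  - simpl. rewrite mulg1. apply e_inv, Hs.
  - exfalso. apply T_acyclic. exists x, (y :: y' :: s).
    refine (conj Hnd (conj _ (conj Hs Hback))). simpl. lia.
Qed.

Lemma walk_prod_closed (l : list V) (x : V) :
  chain T x l -> last l x = x -> walk_prod e x l == 1.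
Proof.
  revert x; induction l as [l IH] using (induction_ltof1 _ (@length V)).
  intros x Hl Hx. destruct (classic (NoDup l)) as [Hnd|Hdup].
  - destruct l as [|y l0]; [reflexivity|].
    destruct (exists_last (l := y :: l0)) as (s & a & E); [discriminate|].
    rewrite E in Hl, Hx, Hnd |- *. rewrite last_last in Hx. subst a.
    apply walk_prod_simple_cycle; assumption.
  - (* cut out the closed sub-walk between two visits of a repeated vertex *)
    destruct (not_NoDup (fun a b => classic (a = b)) Hdup) as (z & A & B & C & ->).
    replace (A ++ z :: B ++ z :: C) with ((A ++ [z]) ++ (B ++ [z]) ++ C) in *
      by (rewrite <- !app_assoc; reflexivity).
    apply chain_app in Hl as [HA Hl]. apply chain_app in Hl as [HB HC].
    rewrite !last_last in HB, HC. rewrite last_app_gen, last_app_gen, !last_last in Hx.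
    assert (Hloop : walk_prod e z (B ++ [z]) == 1).
    { apply IH; [| exact HB | apply last_last].
      unfold ltof. rewrite !length_app. simpl. lia. }
    assert (Hrest : walk_prod e x ((A ++ [z]) ++ C) == 1).
    { apply IH.
      - unfold ltof. rewrite !length_app. simpl. lia.
      - apply chain_app. rewrite last_last. auto.
      - rewrite last_app_gen, last_last. exact Hx. }
    rewrite walk_prod_app, last_last in Hrest.
    rewrite (walk_prod_app e x (A ++ [z])), (walk_prod_app e _ (B ++ [z]) C), !last_last.
    rewrite Hloop, mul1g. exact Hrest.
Qed.

Lemma walk_prod_rev_walk x l :
  chain T x l -> walk_prod e (last l x) (rev_walk x l) == ginv (walk_prod e x l).
Proof.
  intros Hl. apply ginv_unique. rewrite <- walk_prod_app. apply walk_prod_closed.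
  - apply chain_app. split; [exact Hl|]. apply chain_rev_walk; auto.
  - rewrite last_app_gen. apply last_rev_walk.
Qed.

Lemma walk_prod_tree_unique x l1 l2 :
  chain T x l1 -> chain T x l2 -> last l1 x = last l2 x ->
  walk_prod e x l1 == walk_prod e x l2.
Proof.
  intros H1 H2 Hlast. apply eq_of_mulgV1.
  rewrite <- walk_prod_rev_walk by exact H2. rewrite <- Hlast, <- walk_prod_app.
  apply walk_prod_closed.
  - apply chain_app. split; [exact H1|]. rewrite Hlast. apply chain_rev_walk; auto.
  - rewrite last_app_gen, Hlast. apply last_rev_walk.
Qed.

End ClosedWalksInTrees.

Section Simplices.
Context {V : Type} (S : list V -> Prop) (HK : is_complex S).

Lemma simplex_face l l' : S l -> (forall a, In a l' -> In a l) -> l' <> [] -> S l'.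
Proof. intros Hl Hincl Hne. destruct HK as (_ & _ & Hface). exact (Hface l l' Hl Hne Hincl). Qed.

Ltac face H := apply (simplex_face H); [intros ?; simpl; tauto | discriminate].

Lemma simplex_diag (x : V) : S [x; x; x].
Proof. destruct HK as (_ & Hpt & _). face (Hpt x). Qed.

Lemma edge_sym x y : edge S x y -> edge S y x.
Proof. intros H. face H. Qed.

Lemma simplex_back x y : edge S x y -> S [x; y; x].
Proof. intros H. face H. Qed.

Lemma simplex_stutter x y : edge S x y -> S [x; x; y].
Proof. intros H. face H. Qed.

Lemma triangle_edges x y z : S [x; y; z] -> edge S x y /\ edge S y z /\ edge S x z.
Proof. intros H. repeat split; face H. Qed.

End Simplices.

Section Cocycles.
Context {V : Type} (S : list V -> Prop) (HK : is_complex S) {X : grp} {HX : IsGroup X}.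
Local Notation "a * b" := (gmul X a b).
Local Notation "a == b" := (geq X a b) (at level 70).
Local Notation "1" := (gone X).

Definition cocycle (e : V -> V -> X) : Prop :=
  forall x y z, S [x; y; z] -> e x y * e y z == e x z.

Lemma cocycle_diag e : cocycle e -> forall x, e x x == 1.
Proof. intros He x. apply mulg_idem, He, (simplex_diag HK). Qed.

Lemma cocycle_inv e : cocycle e -> forall x y, edge S x y -> e x y * e y x == 1.
Proof.
  intros He x y Hxy. rewrite (He x y x) by exact (simplex_back HK _ _ Hxy).
  apply (cocycle_diag He).
Qed.

Lemma cocycle_conj e (t : V -> X) :
  cocycle e -> cocycle (fun x y => ginv (t x) * (e x y * t y)).
Proof.
  intros He x y z Hxyz.
  rewrite !mulgA, mulKVg, <- (mulgA (e x y)), (He x y z Hxyz). reflexivity.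
Qed.

Lemma eval_word_eqv e w1 w2 :
  cocycle e -> fl_eqv S w1 w2 -> eval_word e w1 == eval_word e w2.
Proof.
  intros He. induction 1 as [w | w1 w2 _ IH | w1 w2 w3 _ IH1 _ IH2
    | a b c d _ IH1 _ IH2 | b [x y] | x y z Hxyz].
  - reflexivity.
  - symmetry. exact IH.
  - rewrite IH1. exact IH2.
  - rewrite !eval_word_app, IH1, IH2. reflexivity.
  - destruct b; simpl; rewrite mulg1; [apply mulVg | apply mulgV].
  - simpl. rewrite !mulg1. symmetry. exact (He x y z Hxyz).
Qed.

Definition floating_lift (e : V -> V -> X) (z : floating_group S) : X :=
  eval_word e (proj1_sig z).

Lemma floating_lift_hom e : cocycle e -> is_hom (floating_group S) X (floating_lift e).
Proof.
  intros He. split; [|split].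
  - intros z1 z2 Hz. exact (eval_word_eqv He Hz).
  - intros z1 z2. apply eval_word_app.
  - reflexivity.
Qed.

Lemma eval_word_ext e1 e2 w :
  (forall x y, edge S x y -> e1 x y == e2 x y) -> fvalid S w ->
  eval_word e1 w == eval_word e2 w.
Proof.
  intros He. induction w as [|[b [x y]] w IH]; intros Hw; simpl; [reflexivity|].
  inversion_clear Hw as [|? ? Hxy Hw']. simpl in Hxy.
  destruct b; rewrite (He x y Hxy), IH by exact Hw'; reflexivity.
Qed.

End Cocycles.

Section FloatingGroupHoms.
Context {V : Type} (S : list V -> Prop) (HK : is_complex S) {X : grp} {HX : IsGroup X}.
Local Notation "a * b" := (gmul X a b).
Local Notation "a == b" := (geq X a b) (at level 70).
Local Notation "1" := (gone X).

(* Invalid words are sent to the identity. *)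
Definition word_of (w : fword V) : floating_group S :=
  match excluded_middle_informative (fvalid S w) with
  | left Hw => exist _ w Hw
  | right _ => fl_one S
  end.

Lemma word_of_val w : fvalid S w -> proj1_sig (word_of w) = w.
Proof. intros Hw. unfold word_of. destruct excluded_middle_informative; easy. Qed.

Lemma fvalid_letter b (x y : V) : edge S x y -> fvalid S [(b, (x, y))].
Proof. intros Hxy. repeat constructor. exact Hxy. Qed.

Lemma fvalid_walk_word x l : chain (edge S) x l -> fvalid S (walk_word x l).
Proof.
  revert x; induction l as [|y l IH]; intros x; simpl; [constructor|].
  intros [Hxy Hl]. constructor; [exact Hxy | apply IH, Hl].
Qed.

Variable h : floating_group S -> X.
Hypothesis Hh : is_hom (floating_group S) X h.

Definition hom_letters (x y : V) : X := h (word_of [(false, (x, y))]).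

Lemma hom_word_of_eqv w1 w2 :
  fvalid S w1 -> fvalid S w2 -> fl_eqv S w1 w2 -> h (word_of w1) == h (word_of w2).
Proof.
  intros H1 H2 Hw. apply Hh. simpl. rewrite !word_of_val by assumption. exact Hw.
Qed.

Lemma hom_word_of_app w1 w2 :
  fvalid S w1 -> fvalid S w2 -> h (word_of (w1 ++ w2)) == h (word_of w1) * h (word_of w2).
Proof.
  intros H1 H2. destruct Hh as (Hh_eqv & Hh_mul & _). rewrite <- Hh_mul. apply Hh_eqv.
  simpl. rewrite !word_of_val by (try apply Forall_app; auto). apply fe_refl.
Qed.

Lemma hom_word_of_nil : h (word_of []) == 1.
Proof.
  destruct Hh as (Hh_eqv & _ & Hh_one). rewrite <- Hh_one. apply Hh_eqv.
  simpl. rewrite word_of_val by constructor. apply fe_refl.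
Qed.

Lemma hom_letters_cocycle : cocycle S hom_letters.
Proof.
  intros x y z Hxyz. destruct (triangle_edges HK _ _ _ Hxyz) as (Hxy & Hyz & Hxz).
  unfold hom_letters. rewrite <- hom_word_of_app by (apply fvalid_letter; assumption).
  apply hom_word_of_eqv.
  - apply Forall_app. split; apply fvalid_letter; assumption.
  - apply fvalid_letter. exact Hxz.
  - apply fe_sym, fe_rel, Hxyz.
Qed.

Lemma hom_word_of_inv x y :
  edge S x y -> h (word_of [(true, (x, y))]) == ginv (hom_letters x y).
Proof.
  intros Hxy. apply ginv_unique. unfold hom_letters.
  rewrite <- hom_word_of_app, <- hom_word_of_nil by (apply fvalid_letter; exact Hxy).
  apply hom_word_of_eqv; [apply Forall_app; split; apply fvalid_letter; exact Hxy
    | constructor | exact (fe_cancel S false (x, y))].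
Qed.

Lemma hom_word_of_eval w : fvalid S w -> h (word_of w) == eval_word hom_letters w.
Proof.
  induction w as [|[b [x y]] w IH]; intros Hw; [apply hom_word_of_nil|].
  inversion_clear Hw as [|? ? Hxy Hw']. simpl in Hxy.
  change ((b, (x, y)) :: w) with ([(b, (x, y))] ++ w).
  rewrite hom_word_of_app, IH by (try apply fvalid_letter; assumption). simpl.
  destruct b; [rewrite hom_word_of_inv by exact Hxy|]; reflexivity.
Qed.

Lemma hom_floating_lift (z : floating_group S) : h z == floating_lift hom_letters z.
Proof.
  unfold floating_lift. rewrite <- hom_word_of_eval by apply (proj2_sig z).
  apply Hh. simpl. rewrite word_of_val by apply (proj2_sig z). apply fe_refl.
Qed.

End FloatingGroupHoms.

Notation edge_homotopic S := (clos_refl_sym_trans (list _) (pstep S)).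

Section EdgePaths.
Context {V : Type} (S : list V -> Prop) (HK : is_complex S).

Lemma homotopic_contract pre (u v w : V) post :
  S [u; v; w] -> edge_homotopic S (pre ++ u :: v :: w :: post) (pre ++ u :: w :: post).
Proof. intros H. apply rst_step, ps_contract, H. Qed.

Lemma homotopic_backtrack pre x l y post :
  chain (edge S) x l -> edge S x y ->
  edge_homotopic S (pre ++ x :: l ++ rev_walk x l ++ y :: post) (pre ++ x :: y :: post).
Proof.
  revert pre x y post; induction l as [|a l IH]; intros pre x y post Hl Hxy.
  - apply rst_refl.
  - destruct Hl as [Hxa Hl].
    replace (pre ++ x :: (a :: l) ++ rev_walk x (a :: l) ++ y :: post)
      with ((pre ++ [x]) ++ a :: l ++ rev_walk a l ++ x :: y :: post)
      by (simpl; rewrite <- !app_assoc; reflexivity).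
    eapply rst_trans; [apply IH; [exact Hl | apply (edge_sym HK), Hxa]|].
    rewrite <- app_assoc. simpl.
    eapply rst_trans; [apply homotopic_contract, (simplex_back HK _ _ Hxa)|].
    apply homotopic_contract, (simplex_stutter HK _ _ Hxy).
Qed.

Definition vertex_word (s : list V) : fword V :=
  match s with
  | [] => []
  | x :: l => walk_word x l
  end.

Lemma vertex_word_split a (u : V) rest :
  vertex_word (a ++ u :: rest) = vertex_word (a ++ [u]) ++ walk_word u rest.
Proof.
  destruct a as [|x a]; [reflexivity|]. simpl.
  replace (a ++ u :: rest) with ((a ++ [u]) ++ rest) by (rewrite <- app_assoc; reflexivity).
  rewrite walk_word_app, last_last. reflexivity.
Qed.

Lemma fl_eqv_of_homotopic s1 s2 :
  edge_homotopic S s1 s2 -> fl_eqv S (vertex_word s1) (vertex_word s2).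
Proof.
  induction 1 as [s1 s2 [a b u v w Huvw] | s | s1 s2 _ IH | s1 s2 s3 _ IH1 _ IH2].
  - cbn [app]. rewrite (vertex_word_split a u (v :: w :: b)), (vertex_word_split a u (w :: b)).
    apply fe_app; [apply fe_refl|].
    apply (fe_app (a := [(false, (u, v)); (false, (v, w))]) (b := [(false, (u, w))])).
    + apply fe_sym, fe_rel, Huvw.
    + apply fe_refl.
  - apply fe_refl.
  - apply fe_sym, IH.
  - eapply fe_trans; eassumption.
Qed.

Variable p : V.

Definition is_loop (l : list V) : Prop := chain (edge S) p l /\ last l p = p.

(* Invalid loops are sent to the identity. *)
Definition loop_of (l : list V) : edge_path_group S p :=
  match excluded_middle_informative (is_loop l) with
  | left Hl => exist _ l Hl
  | right _ => loop_one S p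
  end.

Lemma loop_of_val l : is_loop l -> proj1_sig (loop_of l) = l.
Proof. intros Hl. unfold loop_of. destruct excluded_middle_informative; easy. Qed.

Lemma is_loop_app l1 l2 : is_loop l1 -> is_loop l2 -> is_loop (l1 ++ l2).
Proof.
  intros [H1 E1] [H2 E2]. split.
  - apply chain_app. rewrite E1. auto.
  - rewrite last_app_gen, E1. exact E2.
Qed.

Definition loop_word (z : edge_path_group S p) : floating_group S :=
  word_of S (walk_word p (proj1_sig z)).

Lemma loop_word_hom : is_hom (edge_path_group S p) (floating_group S) loop_word.
Proof.
  split; [|split].
  - intros [l1 H1] [l2 H2] H12. simpl in *. unfold loop_word. simpl.
    rewrite !word_of_val by (apply fvalid_walk_word; tauto).
    exact (fl_eqv_of_homotopic H12).
  - intros [l1 H1] [l2 H2]. simpl. unfold loop_word. simpl.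
    rewrite !word_of_val by (apply fvalid_walk_word;
      try apply (proj1 (is_loop_app H1 H2)); tauto).
    rewrite walk_word_app, (proj2 H1). apply fe_refl.
  - simpl. unfold loop_word. rewrite word_of_val by constructor. apply fe_refl.
Qed.

Context {X : grp} {HX : IsGroup X}.
Local Notation "a * b" := (gmul X a b).
Local Notation "a == b" := (geq X a b) (at level 70).
Local Notation "1" := (gone X).
Variable g : edge_path_group S p -> X.
Hypothesis Hg : is_hom (edge_path_group S p) X g.

Lemma hom_loop_of_homotopic l1 l2 :
  is_loop l1 -> is_loop l2 -> edge_homotopic S (p :: l1) (p :: l2) ->
  g (loop_of l1) == g (loop_of l2).
Proof. intros H1 H2 H12. apply Hg. simpl. rewrite !loop_of_val by assumption. exact H12. Qed.

Lemma hom_loop_of_app l1 l2 :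
  is_loop l1 -> is_loop l2 -> g (loop_of (l1 ++ l2)) == g (loop_of l1) * g (loop_of l2).
Proof.
  intros H1 H2. destruct Hg as (Hg_eqv & Hg_mul & _). rewrite <- Hg_mul. apply Hg_eqv.
  simpl. rewrite !loop_of_val by (try apply is_loop_app; assumption). apply rst_refl.
Qed.

Lemma hom_loop_of_nil : g (loop_of []) == 1.
Proof.
  destruct Hg as (Hg_eqv & _ & Hg_one). rewrite <- Hg_one. apply Hg_eqv.
  simpl. rewrite loop_of_val by (split; simpl; auto). apply rst_refl.
Qed.

Lemma hom_loop_of_val (z : edge_path_group S p) : g z == g (loop_of (proj1_sig z)).
Proof. apply Hg. simpl. rewrite loop_of_val by apply (proj2_sig z). apply rst_refl. Qed.

End EdgePaths.

Section Orientation.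
Context {V : Type}.

Definition pick (x y : V) : V := epsilon (inhabits x) (fun z => z = x \/ z = y).

Lemma pick_cases x y : pick x y = x \/ pick x y = y.
Proof. unfold pick. apply epsilon_spec. exists x. auto. Qed.

Lemma pick_comm x y : pick x y = pick y x.
Proof.
  unfold pick.
  replace (fun z => z = y \/ z = x) with (fun z => z = x \/ z = y)
    by (apply functional_extensionality; intros z; apply propositional_extensionality; tauto).
  f_equal. apply proof_irrelevance.
Qed.

(* A canonical orientation of the unordered pair {x, y}: the free generator
   of F(E) attached to a tree edge must not depend on the order of its ends. *)
Definition opair (x y : V) : V * V :=
  if excluded_middle_informative (pick x y = x) then (x, y) else (y, x).

Lemma opair_cases x y : opair x y = (x, y) \/ opair x y = (y, x).
Proof. unfold opair. destruct excluded_middle_informative; auto. Qed.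

Lemma opair_comm x y : opair x y = opair y x.
Proof.
  unfold opair. rewrite (pick_comm y x).
  destruct (pick_cases x y) as [E|E]; rewrite E;
    do 2 destruct excluded_middle_informative; congruence.
Qed.

End Orientation.

Definition edge_gen {V : Type} (S : list V -> Prop) (x y : V) : floating_group S :=
  word_of S [(false, opair x y)].

Lemma tree_paths_from {V : Type} (S : list V -> Prop) (T : V -> V -> Prop) (p : V) :
  spanning_tree S T ->
  exists P : V -> list V,
    P p = [] /\ (forall x, chain T p (P x)) /\ (forall x, last (P x) p = x).
Proof.
  intros (_ & _ & Hconn & _).
  set (path x := proj1_sig (constructive_indefinite_description _ (Hconn p x))).
  assert (Hpath : forall x, chain T p (path x) /\ last (path x) p = x)
    by (intros x; exact (proj2_sig (constructive_indefinite_description _ (Hconn p x)))).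
  exists (fun x => if excluded_middle_informative (x = p) then [] else path x).
  split; [|split]; intros;
    destruct excluded_middle_informative; solve [congruence | apply Hpath | simpl; auto].
Qed.

Section UniversalProperty.
Context {V : Type} (S : list V -> Prop) (HK : is_complex S).
Context (T : V -> V -> Prop) (HT : spanning_tree S T) (p : V).
Variable tree_path : V -> list V.
Hypothesis tree_path_p : tree_path p = [].
Hypothesis chain_tree_path : forall x, chain T p (tree_path x).
Hypothesis last_tree_path : forall x, last (tree_path x) p = x.

Let T_edge x y : T x y -> edge S x y.
Proof. apply HT. Qed.

Let T_sym x y : T x y -> T y x.
Proof. apply HT. Qed.

Let T_irrefl x : ~ T x x.
Proof. intros Hx. apply (proj1 HT x x Hx). reflexivity. Qed.

Let T_acyclic :
  ~ (exists x l, NoDup (x :: l) /\ 2 <= length l /\ chain T x l /\ T (last l x) x).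
Proof. apply HT. Qed.

Definition tree_return (x : V) : list V := rev_walk p (tree_path x).

Lemma chain_tree_return x : chain T x (tree_return x).
Proof. rewrite <- (last_tree_path x) at 1. apply chain_rev_walk; auto. Qed.

Lemma last_tree_return x : last (tree_return x) x = p.
Proof. rewrite <- (last_tree_path x) at 2. apply last_rev_walk. Qed.

Lemma rev_walk_tree_return x : rev_walk x (tree_return x) = tree_path x.
Proof. rewrite <- (last_tree_path x) at 1. apply rev_walkK. Qed.

Lemma tree_return_p : tree_return p = [].
Proof. unfold tree_return. rewrite tree_path_p. reflexivity. Qed.

Lemma tree_path_split x : exists pre, forall rest, p :: tree_path x ++ rest = pre ++ x :: rest.
Proof.
  destruct (walk_split_last p (tree_path x)) as [pre Hpre]. exists pre. intros rest.
  rewrite app_comm_cons, Hpre, last_tree_path, <- app_assoc. reflexivity.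
Qed.

Lemma homotopic_through_tree pre x y post :
  edge S x y ->
  edge_homotopic S (pre ++ x :: tree_return x ++ tree_path x ++ y :: post) (pre ++ x :: y :: post).
Proof.
  intros Hxy. rewrite <- (rev_walk_tree_return x). apply (homotopic_backtrack HK); [|exact Hxy].
  apply (chain_impl T_edge), chain_tree_return.
Qed.

Lemma is_loop_close l : chain (edge S) p l -> is_loop S p (l ++ tree_return (last l p)).
Proof.
  intros Hl. split.
  - apply chain_app. split; [exact Hl|]. apply (chain_impl T_edge), chain_tree_return.
  - rewrite last_app_gen. apply last_tree_return.
Qed.

Definition edge_loop (u v : V) : list V := tree_path u ++ v :: tree_return v.

Lemma is_loop_edge_loop u v : edge S u v -> is_loop S p (edge_loop u v).
Proof.
  intros Huv. unfold edge_loop.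
  replace (v :: tree_return v) with ([v] ++ tree_return (last (tree_path u ++ [v]) p))
    by (rewrite last_last; reflexivity).
  rewrite app_assoc. apply is_loop_close, chain_app.
  rewrite last_tree_path. simpl. split; [apply (chain_impl T_edge), chain_tree_path | tauto].
Qed.

Lemma chain_edge_loop u v : T u v -> chain T p (edge_loop u v).
Proof.
  intros Huv. apply chain_app. rewrite last_tree_path. simpl.
  split; [apply chain_tree_path | split; [exact Huv | apply chain_tree_return]].
Qed.

Context {X : grp} {HX : IsGroup X}.
Local Notation "a * b" := (gmul X a b).
Local Notation "a == b" := (geq X a b) (at level 70).
Local Notation "1" := (gone X).

Lemma walk_prod_tree_return (e : V -> V -> X) :
  (forall u v, T u v -> e u v * e v u == 1) ->
  forall x, walk_prod e x (tree_return x) == ginv (walk_prod e p (tree_path x)).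
Proof.
  intros e_inv x. unfold tree_return. rewrite <- (last_tree_path x) at 1.
  apply (walk_prod_rev_walk T); auto.
Qed.

Variable g : edge_path_group S p -> X.
Hypothesis Hg : is_hom (edge_path_group S p) X g.

Definition loop_value (u v : V) : X := g (loop_of S p (edge_loop u v)).

Lemma loop_value_cocycle : cocycle S loop_value.
Proof.
  intros x y z Hxyz. destruct (triangle_edges HK _ _ _ Hxyz) as (Hxy & Hyz & Hxz).
  unfold loop_value. rewrite <- (hom_loop_of_app Hg) by (apply is_loop_edge_loop; assumption).
  apply (hom_loop_of_homotopic Hg);
    [apply is_loop_app; apply is_loop_edge_loop; assumption | apply is_loop_edge_loop, Hxz |].
  destruct (tree_path_split x) as [pre Hpre]. unfold edge_loop.
  rewrite <- app_assoc. cbn [app]. rewrite !Hpre.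
  eapply rst_trans.
  - replace (pre ++ x :: y :: tree_return y ++ tree_path y ++ z :: tree_return z)
      with ((pre ++ [x]) ++ y :: tree_return y ++ tree_path y ++ z :: tree_return z)
      by (rewrite <- app_assoc; reflexivity).
    apply homotopic_through_tree, Hyz.
  - rewrite <- app_assoc. apply homotopic_contract, Hxyz.
Qed.

Lemma hom_loop_of_close l :
  chain (edge S) p l -> g (loop_of S p (l ++ tree_return (last l p))) == walk_prod loop_value p l.
Proof.
  induction l as [|y l IH] using rev_ind; intros Hl.
  - simpl. rewrite tree_return_p. apply (hom_loop_of_nil Hg).
  - apply chain_app in Hl as [Hl [Hxy _]]. set (x := last l p) in *.
    rewrite last_last, walk_prod_app. fold x. cbn [walk_prod]. rewrite mulg1, <- IH by exact Hl.
    unfold loop_value. rewrite <- (hom_loop_of_app Hg)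
      by (apply is_loop_close || apply is_loop_edge_loop; assumption).
    apply (hom_loop_of_homotopic Hg).
    + rewrite <- (last_last l y p) at 2. apply is_loop_close, chain_app. simpl. auto.
    + apply is_loop_app; [apply is_loop_close | apply is_loop_edge_loop]; assumption.
    + destruct (walk_split_last p l) as [pre Hpre]. fold x in Hpre. unfold edge_loop.
      rewrite <- !app_assoc, !app_comm_cons, Hpre, <- !app_assoc. cbn [app].
      apply rst_sym, homotopic_through_tree, Hxy.
Qed.

Lemma hom_loop_prod l : is_loop S p l -> g (loop_of S p l) == walk_prod loop_value p l.
Proof.
  intros [Hl Hlast]. rewrite <- hom_loop_of_close by exact Hl.
  rewrite Hlast, tree_return_p, app_nil_r. reflexivity.
Qed.

Lemma loop_value_tree u v : T u v -> loop_value u v == 1.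
Proof.
  intros Huv. unfold loop_value at 1.
  rewrite hom_loop_prod by apply is_loop_edge_loop, T_edge, Huv.
  apply (walk_prod_closed T T_irrefl T_acyclic).
  - intros a b Hab. apply (cocycle_inv HK loop_value_cocycle), T_edge, Hab.
  - apply chain_edge_loop, Huv.
  - apply is_loop_edge_loop, T_edge, Huv.
Qed.

Variable f : V -> V -> X.
Hypothesis Hf : forall x y, T x y -> f x y == f y x.

Definition oriented (u v : V) : X :=
  if excluded_middle_informative (opair u v = (u, v)) then f u v else ginv (f v u).

Lemma oriented_inv u v : T u v -> oriented u v * oriented v u == 1.
Proof.
  intros Huv. assert (Hne : u <> v) by (intros <-; exact (T_irrefl Huv)).
  unfold oriented. rewrite (opair_comm v u).
  destruct (opair_cases u v) as [E|E]; rewrite E;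
    do 2 destruct excluded_middle_informative; try congruence; [apply mulgV | apply mulVg].
Qed.

Definition tree_value (x : V) : X := walk_prod oriented p (tree_path x).

Lemma tree_value_p : tree_value p == 1.
Proof. unfold tree_value. rewrite tree_path_p. reflexivity. Qed.

Lemma tree_value_step x y : T x y -> tree_value y == tree_value x * oriented x y.
Proof.
  intros Hxy. unfold tree_value.
  rewrite (walk_prod_tree_unique T T_sym T_irrefl T_acyclic _ oriented_inv _ _
    (tree_path x ++ [y]) (chain_tree_path y)).
  - rewrite walk_prod_app, last_tree_path. cbn [walk_prod]. rewrite mulg1. reflexivity.
  - apply chain_app. rewrite last_tree_path. simpl. auto.
  - rewrite last_tree_path, last_last. reflexivity.
Qed.

(* The loop value, corrected by the tree values so that tree edges go to f. *)
Definition generator_value (x y : V) : X :=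
  ginv (tree_value x) * (loop_value x y * tree_value y).

Lemma generator_value_tree x y : T x y -> generator_value x y == oriented x y.
Proof.
  intros Hxy. unfold generator_value.
  rewrite (loop_value_tree Hxy), mul1g, (tree_value_step Hxy), mulKg. reflexivity.
Qed.

Definition induced_hom : floating_group S -> X := floating_lift generator_value.

Lemma induced_hom_is_hom : is_hom (floating_group S) X induced_hom.
Proof. exact (floating_lift_hom (cocycle_conj _ loop_value_cocycle)). Qed.

Lemma induced_hom_edge_gen x y : T x y -> induced_hom (edge_gen S x y) == f x y.
Proof.
  intros Hxy. unfold induced_hom, floating_lift, edge_gen.
  destruct (opair_cases x y) as [E|E]; rewrite E;
    rewrite word_of_val by (apply fvalid_letter, T_edge; auto); cbn; rewrite mulg1.
  - rewrite generator_value_tree by exact Hxy. unfold oriented.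
    rewrite E. destruct excluded_middle_informative; [reflexivity | congruence].
  - rewrite generator_value_tree by auto. unfold oriented.
    rewrite opair_comm, E. destruct excluded_middle_informative; [|congruence].
    symmetry. apply Hf, Hxy.
Qed.

Lemma induced_hom_loop_word (z : edge_path_group S p) : induced_hom (loop_word z) == g z.
Proof.
  rewrite (hom_loop_of_val Hg). destruct z as [l Hl]. simpl.
  unfold induced_hom, floating_lift, loop_word. simpl.
  rewrite word_of_val by (apply fvalid_walk_word, Hl). rewrite eval_walk_word.
  unfold generator_value. rewrite walk_prod_conj, (proj2 Hl), tree_value_p, invg1, mul1g, mulg1.
  symmetry. apply hom_loop_prod, Hl.
Qed.

Variable h : floating_group S -> X.
Hypothesis Hh : is_hom (floating_group S) X h.
Hypothesis h_edge_gen : forall x y, T x y -> h (edge_gen S x y) == f x y.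
Hypothesis h_loop_word : forall z : edge_path_group S p, h (loop_word z) == g z.

Lemma hom_letters_tree u v : T u v -> hom_letters h u v == oriented u v.
Proof.
  intros Huv. assert (Hne : u <> v) by (intros <-; exact (T_irrefl Huv)).
  unfold oriented. destruct (opair_cases u v) as [E|E];
    destruct excluded_middle_informative; try congruence.
  - rewrite <- (h_edge_gen Huv). unfold edge_gen. rewrite E. reflexivity.
  - rewrite <- (h_edge_gen (T_sym Huv)). unfold edge_gen. rewrite opair_comm, E.
    apply ginv_unique, (cocycle_inv HK (hom_letters_cocycle HK Hh)), T_edge, T_sym, Huv.
Qed.

Lemma hom_letters_edge x y : edge S x y -> hom_letters h x y == generator_value x y.
Proof.
  intros Hxy.
  assert (Hloop : loop_value x y
                  == tree_value x * (hom_letters h x y * ginv (tree_value y))).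
  { unfold loop_value. rewrite <- h_loop_word. unfold loop_word.
    rewrite loop_of_val by (apply is_loop_edge_loop, Hxy).
    rewrite (hom_word_of_eval Hh)
      by (apply fvalid_walk_word, (proj1 (is_loop_edge_loop Hxy))).
    rewrite eval_walk_word. unfold edge_loop. rewrite walk_prod_app, last_tree_path.
    cbn [walk_prod]. unfold tree_value.
    rewrite (walk_prod_ext T _ _ _ _ hom_letters_tree (chain_tree_path x)).
    rewrite (walk_prod_ext T _ _ _ _ hom_letters_tree (chain_tree_return y)).
    rewrite (walk_prod_tree_return _ oriented_inv). reflexivity. }
  unfold generator_value. rewrite Hloop, mulgA, mulKg, mulgA, mulVg, mulg1. reflexivity.
Qed.

Lemma induced_hom_unique z : h z == induced_hom z.
Proof.
  rewrite (hom_floating_lift Hh). unfold induced_hom, floating_lift.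
  apply (eval_word_ext (S := S)); [exact hom_letters_edge | apply (proj2_sig z)].
Qed.

End UniversalProperty.

Theorem proposition6p3 (V : Type) (S : list V -> Prop) (T : V -> V -> Prop) (p : V) :
  is_complex S -> connected S -> spanning_tree S T ->
  is_free_prod_on_edges T (floating_group S) (edge_path_group S p).
Proof.
  (* connectedness of K is implied by the existence of a spanning tree *)
  intros HK _ HT.
  destruct (tree_paths_from p HT) as (P & P_p & P_chain & P_last).
  exists (edge_gen S), (@loop_word V S p). split; [|split].
  - intros x y _. unfold edge_gen. rewrite opair_comm. apply fe_refl.
  - apply loop_word_hom.
  - intros X HX f g Hf Hg. assert (HX' : IsGroup X) by (constructor; exact HX). split.
    + exists (induced_hom P g f). split; [|split].
      * exact (induced_hom_is_hom HK HT P P_chain P_last Hg f).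
      * exact (induced_hom_edge_gen HK HT P P_p P_chain P_last Hg f Hf).
      * exact (induced_hom_loop_word HK HT P P_p P_chain P_last Hg f).
    + intros h1 h2 Hh1 Hh2 Ha1 Hj1 Ha2 Hj2 w.
      rewrite (induced_hom_unique HK HT P P_chain P_last g f Hh1 Ha1 Hj1 w),
        (induced_hom_unique HK HT P P_chain P_last g f Hh2 Ha2 Hj2 w).
      reflexivity.
Qed.
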